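(* Let $e\geq 1$, $n\geq 2$, and let $s\in G(e,e,n)$ be the reflection with reflecting hyperplane $z_i=\zeta z_j$ ($i\neq j$, $\zeta\in\mu_e$). The sign of the permutation induced by $s$ on the set of reflecting hyperplanes of $G(e,e,n)$ is $(-1)^{(n-2)e+(e-2)/2}=(-1)^{(e-2)/2}$ if $e$ is even, and $(-1)^{(n-2)e+(e-1)/2}=(-1)^{n+(e-1)/2}$ if $e$ is odd.
   Context: $\mu_e$ is the group of $e$-th roots of unity. $G(e,e,n)$ is the group of $n\times n$ monomial matrices with nonzero entries in $\mu_e$ whose product is $1$, acting on $\mathbb{C}^n$; its reflecting hyperplanes are $z_a=\xi z_b$ for $a<b$, $\xi\in\mu_e$. *)

From mathcomp Require Import all_boot all_order all_algebra all_fingroup all_field.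
Set Implicit Arguments. Unset Strict Implicit. Unset Printing Implicit Defensive.
Import GRing.Theory Num.Theory.
Local Open Scope ring_scope.

Definition in_Geen (e n : nat) (M : 'M[algC]_n) : Prop :=
  exists (p : 'S_n) (d : 'I_n -> algC),
    [/\ forall k, d k ^+ e = 1,
        \prod_k d k = 1 &
        M = \matrix_(r, c) (if r == p c then d c else 0)].

Definition reflection_with_hyp (n : nat) (s : 'M[algC]_n) (i j : 'I_n) (zeta : algC) : Prop :=
  s != 1%:M /\ forall z : 'cV[algC]_n, z i 0 = zeta * z j 0 -> s *m z = z.

(* Index set of the reflecting hyperplanes of G(e,e,n): triples (a,b,k) with
   a < b, k : 'I_e, standing for the hyperplane z_a = w^k z_b where w is a
   primitive e-th root of unity (so w^k runs over mu_e). *)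
Definition hypidx (n e : nat) := {t : 'I_n * 'I_n * 'I_e | (t.1.1 < t.1.2)%N}.

Definition hyp (n e : nat) (w : algC) (t : hypidx n e) (z : 'cV[algC]_n) : Prop :=
  z (sval t).1.1 0 = w ^+ (sval t).2 * z (sval t).1.2 0.

Definition induces_perm (n e : nat) (w : algC) (s : 'M[algC]_n) (p : {perm hypidx n e}) : Prop :=
  forall t (y : 'cV[algC]_n), hyp w (p t) y <-> exists2 z, hyp w t z & y = s *m z.

From mathcomp Require Import all_boot all_order all_algebra all_fingroup all_field.
From mathcomp Require Import zify.
From mathcomp.algebra_tactics Require Import ring.
Set Implicit Arguments. Unset Strict Implicit. Unset Printing Implicit Defensive.
Import GRing.Theory Num.Theory.

(* A reflection s of G(e,e,n) fixing z_i = zeta z_j pointwise is the monomial map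
   (s z)_r = c_r z_(tau r), where tau is the transposition (i j), c_i = zeta, c_j = zeta^-1
   and c_r = 1 otherwise.  It is an involution, so it permutes the hyperplanes by an involution
   whose sign is (-1)^(m/2), m being the number of moved hyperplanes.  The hyperplane
   z_a = x z_b is sent to z_(tau a) = (x c_b / c_a) z_(tau b): it is fixed when {a, b} misses
   {i, j}, moved when {a, b} meets {i, j} in one point, and for {a, b} = {i, j} it is fixed iff
   x^2 = c_a^2, which has two solutions x in mu_e if e is even and one if e is odd.  Hence
   m = 2(n-2)e + e - 2 or 2(n-2)e + e - 1. *)

Lemma odd_perm_involutive (T : finType) (p : {perm T}) :
  involutive p -> odd_perm p = odd #|[set x | p x != x]|./2.
Proof.
have [m] := ubnP #|[set x | p x != x]|; elim: m p => // m IHm p lt_moved_m pK.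
have [moved0 | [x moved_x]] := set_0Vmem [set x | p x != x].
  rewrite moved0 cards0 (_ : p = 1%g) ?odd_perm1 //.
  by apply/permP => x; move/setP/(_ x): moved0; rewrite !inE perm1 => /negbFE/eqP.
rewrite inE in moved_x; set y := p x.
have xy : x != y by rewrite eq_sym.
pose q := (tperm x y * p)%g.
have qE z : q z = if z \in [set x; y] then z else p z.
  rewrite permM !inE; case: (eqVneq z x) => [-> | zx]; first by rewrite tpermL pK.
  case: (eqVneq z y) => [-> | zy]; first by rewrite tpermR.
  by rewrite tpermD // eq_sym.
have moved_q : [set z | p z != z] = [set x; y] :|: [set z | q z != z].
  apply/setP => z; rewrite !inE qE !inE.
  case: (eqVneq z x) => [-> | _]; first by rewrite eqxx.
  by case: (eqVneq z y) => [-> | _] //=; rewrite /y pK eq_sym.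
have disj : [set x; y] :&: [set z | q z != z] = set0.
  by apply/setP => z; rewrite !inE qE !inE; case: (_ || _); rewrite ?eqxx ?andbF.
have card_moved : #|[set z | p z != z]| = (#|[set z | q z != z]|).+2.
  by rewrite moved_q cardsU disj cards0 subn0 cards2 xy.
have qK : involutive q.
  move=> z; rewrite (qE z); case: ifP => [z_xy | z_xy]; first by rewrite qE z_xy.
  by rewrite qE !inE !(canF_eq pK) [p y]pK -/y orbC -in_set2 z_xy pK.
have pE : p = (tperm x y * q)%g by rewrite mulgA tperm2 mul1g.
rewrite {1}pE odd_mul_tperm xy card_moved IHm //.
by move: lt_moved_m; rewrite card_moved => /ltnW.
Qed.

Lemma sum_symmetric_ltn n (F : 'I_n -> 'I_n -> nat) :
  (forall a b, F a b = F b a) ->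
  \sum_(a < n) \sum_(b < n) F a b =
    (\sum_(a < n) \sum_(b < n | a < b) F a b).*2 + \sum_(a < n) F a a.
Proof.
move=> F_sym; have split_row (a : 'I_n) : \sum_(b < n) F a b =
    \sum_(b < n | a < b) F a b + \sum_(b < n | b < a) F a b + F a a.
  rewrite (bigD1 a) //= addnC (bigID (fun b : 'I_n => a < b)) /=.
  by congr ((_ + _) + _); eapply eq_bigl => b; rewrite -val_eqE /=; case: ltngtP.
have lower_upper :
    \sum_(a < n) \sum_(b < n | b < a) F a b = \sum_(a < n) \sum_(b < n | a < b) F a b.
  rewrite (exchange_big_dep predT) //=.
  by apply: eq_bigr => a _; apply: eq_bigr => b _; rewrite F_sym.
under eq_bigr do rewrite split_row.
by rewrite !big_split /= lower_upper addnn.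
Qed.

Lemma sum_mem_if (T : finType) (A : {set T}) (u v : nat) :
  \sum_x (if x \in A then u else v) = #|A| * u + #|~: A| * v.
Proof.
rewrite (bigID (mem A)) /= -!sum_nat_const; congr (_ + _).
  by apply: eq_bigr => x ->.
by apply: eq_big => x; rewrite ?inE // => /negbTE ->.
Qed.

Lemma sum_ltn_mem_if n (A : {set 'I_n}) (u v : nat) :
  (\sum_(a < n) \sum_(b < n | a < b)
      (if a \in A then (if b \in A then u else v) else if b \in A then v else 0)).*2
    = #|A| * #|A|.-1 * u + (#|A| * #|~: A| * v).*2.
Proof.
pose F (a b : 'I_n) := if a \in A then (if b \in A then u else v) else if b \in A then v else 0.
have row a : \sum_(b < n) F a b = if a \in A then #|A| * u + #|~: A| * v else #|A| * v.
  by rewrite /F; case: (a \in A); rewrite sum_mem_if ?muln0 ?addn0.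
have diag : \sum_(a < n) F a a = #|A| * u.
  rewrite (eq_bigr (fun a => if a \in A then u else 0)) => [|a _].
    by rewrite sum_mem_if muln0 addn0.
  by rewrite /F; case: (a \in A).
have F_sym a b : F a b = F b a by rewrite /F; case: (a \in A); case: (b \in A).
have := sum_symmetric_ltn F_sym.
rewrite (eq_bigr _ (fun a _ => row a)) sum_mem_if diag.
move: (\sum_(a < n) \sum_(b < n | a < b) F a b) => S; rewrite -!mul2n.
by move: #|A| #|~: A| => [|a] c /=; nia.
Qed.

Local Open Scope ring_scope.

Lemma expr_eq1_neq0 (R : nzRingType) e (x : R) : (0 < e)%N -> x ^+ e = 1 -> x != 0.
Proof.
by move=> e_gt0; apply: contra_eq_neq => ->; rewrite expr0n (gtn_eqF e_gt0) eq_sym oner_eq0.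
Qed.

Lemma card_prim_root_expr_eq (F : fieldType) e (w x : F) : e.-primitive_root w ->
  #|[set k : 'I_e | w ^+ k == x]| = (x ^+ e == 1).
Proof.
move=> hw; have [xe1 | xe_neq1] := eqVneq (x ^+ e) 1.
  have [k0 ->] := prim_rootP hw xe1.
  suff -> : [set k : 'I_e | w ^+ k == w ^+ k0] = [set k0] by rewrite cards1.
  apply/setP => k.
  by rewrite !inE (eq_prim_root_expr hw) !modn_small // -val_eqE.
apply/eqP; rewrite cards_eq0; apply/eqP/setP => k; rewrite !inE.
by apply: contraNF xe_neq1 => /eqP <-; rewrite exprAC (prim_expr_order hw) expr1n.
Qed.

Lemma card_prim_root_sqr_eq (F : numFieldType) e (w nu : F) : e.-primitive_root w ->
  nu ^+ e = 1 -> #|[set k : 'I_e | (w ^+ k) ^+ 2 == nu ^+ 2]| = (~~ odd e).+1.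
Proof.
move=> hw nu_e; have nu_neq0 := expr_eq1_neq0 (prim_order_gt0 hw) nu_e.
(* w^k = -nu is solvable iff (-nu)^e = (-1)^e is 1, i.e. iff e is even. *)
have -> : [set k : 'I_e | (w ^+ k) ^+ 2 == nu ^+ 2] =
          [set k : 'I_e | w ^+ k == nu] :|: [set k : 'I_e | w ^+ k == - nu].
  by apply/setP => k; rewrite !inE eqf_sqr.
rewrite cardsU; have -> : [set k : 'I_e | w ^+ k == nu] :&: [set k : 'I_e | w ^+ k == - nu] = set0.
  apply/setP => k; rewrite !inE; apply/negP => /andP[/eqP-> /eqP nu_N].
  by move: nu_neq0; rewrite -eqNr -nu_N eqxx.
rewrite !card_prim_root_expr_eq // nu_e exprNn nu_e mulr1 -signr_odd cards0.
by case: (odd e); rewrite ?expr1 ?expr0 ?eqNr ?oner_eq0 eqxx.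
Qed.

Definition in_hyperplane (R : pzRingType) n (a b : 'I_n) (x : R) (z : 'cV[R]_n) : Prop :=
  z a 0 = x * z b 0.

Definition same_hyperplane (R : pzRingType) n (a b : 'I_n) (x : R) (a' b' : 'I_n) (x' : R) :=
  [&& a == a', b == b' & x == x'] || [&& a == b', b == a' & x * x' == 1].

Lemma in_hyperplaneC (R : comPzRingType) n (a b : 'I_n) (x x' : R) z : x * x' = 1 ->
  in_hyperplane a b x z <-> in_hyperplane b a x' z.
Proof.
rewrite /in_hyperplane => xx'; split=> [-> | ->]; first by rewrite mulrA [x' * x]mulrC xx' mul1r.
by rewrite mulrA xx' mul1r.
Qed.

Lemma in_hyperplane_delta (F : fieldType) n (a b m : 'I_n) (x : F) : a != b -> x != 0 ->
  in_hyperplane a b x (delta_mx m 0) <-> m \notin [set a; b].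
Proof.
move=> ab x_neq0; rewrite /in_hyperplane !mxE !inE !andbT ![_ == m]eq_sym.
case: (eqVneq m a) => [-> | _].
  by rewrite (negbTE ab) mulr0; split=> // /eqP; rewrite oner_eq0.
case: (eqVneq m b) => _; last by rewrite mulr0.
by rewrite mulr1; split=> // /esym/eqP; rewrite (negbTE x_neq0).
Qed.

Lemma in_hyperplaneP (F : fieldType) n (a b a' b' : 'I_n) (x x' : F) :
  a != b -> a' != b' -> x != 0 -> x' != 0 ->
  reflect (forall z, in_hyperplane a b x z <-> in_hyperplane a' b' x' z)
          (same_hyperplane a b x a' b' x').
Proof.
move=> ab ab' x_neq0 x'_neq0; apply: (iffP idP).
  case/orP => /and3P[/eqP<- /eqP<- /eqP xx'] z; first by rewrite xx'.
  exact: in_hyperplaneC.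
(* Coordinate vectors detect the pair {a, b}; the vector x e_a + e_b then pins down x'. *)
move=> same.
have same_pair m : (m \notin [set a; b]) = (m \notin [set a'; b']).
  apply/idP/idP => [/(in_hyperplane_delta _ ab x_neq0) | /(in_hyperplane_delta _ ab' x'_neq0)].
    by move/same/(in_hyperplane_delta _ ab' x'_neq0).
  by move/same/(in_hyperplane_delta _ ab x_neq0).
pose v : 'cV[F]_n := \col_r (if r == a then x else if r == b then 1 else 0).
have v_a : v a 0 = x by rewrite mxE eqxx.
have v_b : v b 0 = 1 by rewrite mxE eq_sym (negbTE ab) eqxx.
have /same v_hyp : in_hyperplane a b x v by rewrite /in_hyperplane v_a v_b mulr1.
have := same_pair a; have := same_pair b; rewrite !inE !eqxx orbT /=.
move=> /esym/negbFE b_in /esym/negbFE a_in.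
move: b_in v_hyp; rewrite /same_hyperplane /in_hyperplane; case/orP: a_in => /eqP <-.
  by rewrite eq_sym (negbTE ab) /= => /eqP <-; rewrite v_a v_b mulr1 => ->; rewrite !eqxx.
rewrite [b == a]eq_sym (negbTE ab) orbF => /eqP <-.
by rewrite v_a v_b (negbTE ab) mulrC => <-; rewrite !eqxx.
Qed.

Lemma in_hyperplane_mulmx (F : fieldType) n (s : 'M[F]_n) (c : 'I_n -> F)
    (sigma : 'I_n -> 'I_n) (a b : 'I_n) (x : F) :
  (forall (z : 'cV_n) r, (s *m z) r 0 = c r * z (sigma r) 0) -> c a != 0 ->
  forall z : 'cV_n,
    in_hyperplane a b x (s *m z) <-> in_hyperplane (sigma a) (sigma b) (x * c b / c a) z.
Proof.
move=> s_act ca_neq0 z; rewrite /in_hyperplane !s_act.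
by split=> [sz_hyp | ->]; [apply: (mulfI ca_neq0); rewrite sz_hyp | ]; field.
Qed.

Definition monomial_mx (R : pzRingType) n (p : 'S_n) (d : 'I_n -> R) : 'M[R]_n :=
  \matrix_(r, c) (if r == p c then d c else 0).

Lemma monomial_mxE (R : pzRingType) n (p : 'S_n) (d : 'I_n -> R) (z : 'cV[R]_n) r :
  (monomial_mx p d *m z) r 0 = d ((p^-1)%g r) * z ((p^-1)%g r) 0.
Proof.
rewrite mxE (bigD1 ((p^-1)%g r)) //= mxE permKV eqxx big1 ?addr0 // => c c_neq.
rewrite mxE; case: eqP => [r_pc | _]; last by rewrite mul0r.
by rewrite r_pc permK eqxx in c_neq.
Qed.

Definition refl_coef (F : fieldType) n (i j : 'I_n) (zeta : F) (r : 'I_n) : F :=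
  if r == i then zeta else if r == j then zeta^-1 else 1.

Lemma refl_coef_neq0 (F : fieldType) n (i j : 'I_n) (zeta : F) r :
  zeta != 0 -> refl_coef i j zeta r != 0.
Proof. by rewrite /refl_coef; case: ifP => // _; case: ifP; rewrite ?invr_eq0 ?oner_eq0. Qed.

Section MonomialReflection.

Variables (F : fieldType) (n : nat) (p : 'S_n) (d : 'I_n -> F) (i j : 'I_n) (zeta : F).
Hypotheses (ij : i != j) (zeta_neq0 : zeta != 0).
Hypothesis fixes_hyp : forall z : 'cV[F]_n, z i 0 = zeta * z j 0 -> monomial_mx p d *m z = z.

Local Notation q := (p^-1)%g.

Lemma monomial_fixed_coord (z : 'cV[F]_n) r : z i 0 = zeta * z j 0 -> d (q r) * z (q r) 0 = z r 0.
Proof. by move=> /fixes_hyp/(congr1 (fun y : 'cV[F]_n => y r 0)); rewrite monomial_mxE. Qed.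

Lemma monomial_fixed_off k : k \notin [set i; j] -> q k = k /\ d k = 1.
Proof.
rewrite !inE negb_or => /andP[ki kj].
have := @monomial_fixed_coord (delta_mx k 0) k.
rewrite !mxE !andbT eqxx ![_ == k]eq_sym (negbTE ki) (negbTE kj) mulr0 => /(_ erefl).
case: (eqVneq (q k) k) => [-> | _]; last by rewrite mulr0 => /esym/eqP; rewrite oner_eq0.
by rewrite mulr1.
Qed.

Lemma monomial_perm_pair r : r \in [set i; j] -> q r \in [set i; j].
Proof.
move=> r_ij; apply: contraT => qr_off; have [qqr _] := monomial_fixed_off qr_off.
by rewrite (perm_inj qqr) r_ij in qr_off.
Qed.

Hypothesis monomial_neq1 : monomial_mx p d != 1%:M.

Lemma monomial_reflection_swap : [/\ q i = j, q j = i, d j = zeta & d i = zeta^-1].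
Proof.
pose f : 'cV[F]_n := \col_r (if r == i then zeta else if r == j then 1 else 0).
have f_hyp : f i 0 = zeta * f j 0 by rewrite !mxE eqxx eq_sym (negbTE ij) eqxx mulr1.
have f_i : f i 0 = zeta by rewrite mxE eqxx.
have f_j : f j 0 = 1 by rewrite mxE eq_sym (negbTE ij) eqxx.
have qi_ij := monomial_perm_pair (set21 i j); have qj_ij := monomial_perm_pair (set22 i j).
have q_ij : q j != q i by rewrite (inj_eq (@perm_inj _ _)) eq_sym.
have [qi_i | qi_j] : q i = i \/ q i = j by move: qi_ij; rewrite !inE => /orP[] /eqP; [left | right].
  have qj_j : q j = j by move: qj_ij q_ij; rewrite qi_i !inE => /orP[] /eqP ->; rewrite ?eqxx.
  case/eqP: monomial_neq1; apply/matrixP => r c; rewrite !mxE.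
  have [qc dc] : q c = c /\ d c = 1.
    case: (boolP (c \in [set i; j])) => [| /monomial_fixed_off //].
    rewrite !inE => /orP[] /eqP ->; [rewrite qi_i | rewrite qj_j]; split=> //.
      by apply: (mulIf zeta_neq0); rewrite mul1r -{2}f_i -(monomial_fixed_coord i f_hyp) qi_i f_i.
    by rewrite -[RHS]f_j -(monomial_fixed_coord j f_hyp) qj_j f_j mulr1.
  have -> : p c = c by rewrite -{1}qc permKV.
  by rewrite dc; case: (r == c).
have qj_i : q j = i by move: qj_ij q_ij; rewrite qi_j !inE => /orP[] /eqP ->; rewrite ?eqxx.
split=> //; first by rewrite -f_i -(monomial_fixed_coord i f_hyp) qi_j f_j mulr1.
apply: (mulIf zeta_neq0); rewrite mulVf //.
by rewrite -f_i -f_j -(monomial_fixed_coord j f_hyp) qj_i.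
Qed.

Lemma monomial_reflectionE (z : 'cV[F]_n) r :
  (monomial_mx p d *m z) r 0 = refl_coef i j zeta r * z (tperm i j r) 0.
Proof.
have [qi qj dj di] := monomial_reflection_swap.
rewrite monomial_mxE /refl_coef; case: (eqVneq r i) => [-> | ri]; first by rewrite qi dj tpermL.
case: (eqVneq r j) => [-> | rj]; first by rewrite qj di tpermR.
have [-> ->] : q r = r /\ d r = 1 by apply: monomial_fixed_off; rewrite !inE negb_or ri rj.
by rewrite tpermD // eq_sym.
Qed.

End MonomialReflection.

Definition refl_fixes_hyperplane (F : fieldType) n (i j : 'I_n) (zeta : F) (a b : 'I_n) (x : F) :=
  same_hyperplane (tperm i j a) (tperm i j b)
    (x * refl_coef i j zeta b / refl_coef i j zeta a) a b x.

Lemma refl_fixes_hyperplaneP (F : fieldType) n (s : 'M[F]_n) (i j : 'I_n) (zeta : F)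
    (a b : 'I_n) (x : F) :
  (forall (z : 'cV_n) r, (s *m z) r 0 = refl_coef i j zeta r * z (tperm i j r) 0) ->
  zeta != 0 -> a != b -> x != 0 ->
  reflect (forall z, in_hyperplane a b x (s *m z) <-> in_hyperplane a b x z)
          (refl_fixes_hyperplane i j zeta a b x).
Proof.
move=> s_act zeta_neq0 ab x_neq0.
have c_neq0 r := refl_coef_neq0 i j r zeta_neq0.
apply: (equivP (in_hyperplaneP _ _ _ _)) => //.
- by rewrite (inj_eq (@perm_inj _ _)).
- by rewrite mulf_neq0 ?invr_eq0 ?mulf_neq0.
by split=> same z; have := same z;
  have := @in_hyperplane_mulmx _ _ s _ _ a b x s_act (c_neq0 a) z; tauto.
Qed.

Lemma ltn_ord_neq n (a b : 'I_n) : (a < b)%N -> a != b.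
Proof. by move=> lt_ab; rewrite -val_eqE neq_ltn lt_ab. Qed.

Section HyperplaneIndex.

Variables (e n : nat) (w : algC).
Hypothesis hw : e.-primitive_root w.

Lemma prim_root_expr_neq0 k : w ^+ k != 0.
Proof. exact: expf_neq0 (expr_eq1_neq0 (prim_order_gt0 hw) (prim_expr_order hw)). Qed.

Lemma hypidx_inj (t t' : hypidx n e) : (forall z, hyp w t z <-> hyp w t' z) -> t = t'.
Proof.
case: t t' => [[[a b] k] /= ab] [[[a' b'] k'] /= ab'] same.
have := introT (in_hyperplaneP (ltn_ord_neq ab) (ltn_ord_neq ab')
  (prim_root_expr_neq0 k) (prim_root_expr_neq0 k')) same.
case/orP => /and3P[/eqP ea /eqP eb]; last first.
  by move=> _; exfalso; have := ab'; rewrite -ea -eb ltnNge (ltnW ab).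
rewrite (eq_prim_root_expr hw) !modn_small // => /eqP/val_inj ek.
by apply: val_inj; rewrite /= ea eb ek.
Qed.

Lemma exists_hypidx (a b : 'I_n) (x : algC) : a != b -> x ^+ e = 1 ->
  exists t : hypidx n e, forall z, hyp w t z <-> in_hyperplane a b x z.
Proof.
move=> ab x_e; have x_neq0 := expr_eq1_neq0 (prim_order_gt0 hw) x_e.
case: (ltngtP a b) => [lt_ab | lt_ba | /val_inj eq_ab]; last by rewrite eq_ab eqxx in ab.
  by have [k ->] := prim_rootP hw x_e; exists (exist _ (a, b, k) lt_ab).
have xV_e : x^-1 ^+ e = 1 by rewrite exprVn x_e invr1.
have [k xVk] := prim_rootP hw xV_e; exists (exist _ (b, a, k) lt_ba) => z.
by rewrite /hyp /= -xVk; apply: iff_sym; apply: in_hyperplaneC; rewrite mulfV.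
Qed.

End HyperplaneIndex.

Section ReflectionOnHyperplanes.

Variables (e n : nat) (w : algC) (i j : 'I_n) (zeta : algC) (s : 'M[algC]_n).
Hypotheses (hw : e.-primitive_root w) (ij : i != j) (zeta_e : zeta ^+ e = 1).
Hypothesis s_act : forall (z : 'cV_n) r, (s *m z) r 0 = refl_coef i j zeta r * z (tperm i j r) 0.

Local Notation c := (refl_coef i j zeta).
Local Notation tau := (tperm i j).

Let zeta_neq0 : zeta != 0 := expr_eq1_neq0 (prim_order_gt0 hw) zeta_e.

Lemma refl_coef_expr r : c r ^+ e = 1.
Proof.
by rewrite /refl_coef; case: ifP => // _; case: ifP; rewrite ?exprVn ?zeta_e ?invr1 ?expr1n.
Qed.

Lemma refl_coef_tperm r : c r * c (tau r) = 1.
Proof.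
rewrite /refl_coef; case: (eqVneq r i) => [-> | ri].
  by rewrite tpermL eqxx eq_sym (negbTE ij) mulfV.
case: (eqVneq r j) => [-> | rj]; first by rewrite tpermR eqxx mulVf.
have -> : tau r = r by rewrite tpermD // eq_sym.
by rewrite (negbTE ri) (negbTE rj) mulr1.
Qed.

Lemma reflK (z : 'cV_n) : s *m (s *m z) = z.
Proof. by apply/matrixP => r k; rewrite (ord1 k) !s_act tpermK mulrA refl_coef_tperm mul1r. Qed.

Lemma induces_permE (q : {perm hypidx n e}) :
  induces_perm w s q <-> forall t z, hyp w (q t) z <-> hyp w t (s *m z).
Proof.
have image (t : hypidx n e) (z : 'cV_n) : (exists2 y, hyp w t y & z = s *m y) <-> hyp w t (s *m z).
  by split=> [[y y_t ->] | sz_t]; [rewrite reflK | exists (s *m z); rewrite ?reflK].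
by split=> q_s t z; move: (q_s t z) (image t z); tauto.
Qed.

Lemma hyp_mulmx (t : hypidx n e) :
  exists t' : hypidx n e, forall z, hyp w t' z <-> hyp w t (s *m z).
Proof.
case: t => [[[a b] k] /= ab].
have tau_ab : tau a != tau b by rewrite (inj_eq (@perm_inj _ _)) ltn_ord_neq.
have x_e : (w ^+ k * c b / c a) ^+ e = 1.
  by rewrite !exprMn exprVn !refl_coef_expr exprAC (prim_expr_order hw) expr1n invr1 !mulr1.
have [t' t'_hyp] := exists_hypidx hw tau_ab x_e; exists t' => z.
have := @in_hyperplane_mulmx _ _ s _ _ a b (w ^+ k) s_act (refl_coef_neq0 i j a zeta_neq0) z.
by move: (t'_hyp z); rewrite /hyp /=; tauto.
Qed.

Lemma exists_induced_perm : exists q : {perm hypidx n e}, induces_perm w s q.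
Proof.
have [f f_hyp] := fin_all_exists hyp_mulmx.
have f_inj : injective f.
  move=> t1 t2 f12; apply: (hypidx_inj hw) => z.
  by rewrite -[z]reflK -!f_hyp f12.
by exists (perm f_inj); apply/induces_permE => t z; rewrite permE.
Qed.

Lemma induced_perm_involutive (q : {perm hypidx n e}) : induces_perm w s q -> involutive q.
Proof. by move/induces_permE => q_s t; apply: (hypidx_inj hw) => z; rewrite !q_s reflK. Qed.

Lemma induced_perm_fixed (q : {perm hypidx n e}) t : induces_perm w s q ->
  (q t == t) = refl_fixes_hyperplane i j zeta (sval t).1.1 (sval t).1.2 (w ^+ (sval t).2).
Proof.
move/induces_permE => q_s; have := q_s t; case: t => [[[a b] k] /= ab] qt_s.
apply/eqP/(refl_fixes_hyperplaneP s_act zeta_neq0 (ltn_ord_neq ab) (prim_root_expr_neq0 hw k)).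
  by move=> qt z; have := qt_s z; rewrite qt /hyp /=; tauto.
move=> fixes; apply: (hypidx_inj hw) => z.
by have := qt_s z; have := fixes z; rewrite /hyp /=; tauto.
Qed.

Lemma card_refl_moved_pair (a b : 'I_n) : a != b ->
  #|[set k : 'I_e | ~~ refl_fixes_hyperplane i j zeta a b (w ^+ k)]| =
  (if a \in [set i; j] then (if b \in [set i; j] then e - (~~ odd e).+1 else e)
   else if b \in [set i; j] then e else 0)%N.
Proof.
move=> ab; have card_not (P : pred 'I_e) : #|[set k | ~~ P k]| = (e - #|[set k | P k]|)%N.
  by rewrite cardsCs card_ord; congr (_ - _)%N; apply: eq_card => k; rewrite !inE negbK.
have tau_out r : r \notin [set i; j] -> tau r = r /\ c r = 1.
  rewrite !inE negb_or => /andP[ri rj].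
  by rewrite /refl_coef (negbTE ri) (negbTE rj) tpermD // eq_sym.
have tau_in r : r \in [set i; j] -> tau r \in [set i; j] /\ tau r != r.
  by rewrite !inE => /orP[]/eqP->; rewrite ?tpermL ?tpermR eqxx ?orbT; split=> //; rewrite eq_sym.
rewrite card_not /refl_fixes_hyperplane /same_hyperplane.
case: (boolP (a \in _)) => a_in; case: (boolP (b \in _)) => b_in.
- (* The image of z_a = x z_b is z_b = x c_a^-2 z_a. *)
  have tau_a : tau a = b.
    by move: a_in b_in ab; rewrite !inE => /orP[]/eqP-> /orP[]/eqP->; rewrite ?eqxx ?tpermL ?tpermR.
  have tau_b : tau b = a by rewrite -tau_a tpermK.
  have c_a := refl_coef_neq0 i j a zeta_neq0.
  have cb : c b = (c a)^-1 by apply: (mulfI c_a); rewrite mulfV // -tau_a refl_coef_tperm.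
  rewrite -(card_prim_root_sqr_eq hw (refl_coef_expr a)); congr (_ - _)%N; apply: eq_card => k.
  rewrite !inE tau_a tau_b eqxx eq_sym (negbTE ab) /= cb -(inj_eq (mulIf (expf_neq0 2 c_a))) mul1r.
  by rewrite eqxx /=; congr (_ == _); field.
- have [tau_a_in tau_a_neq] := tau_in a a_in.
  have tau_a_b : (tau a == b) = false by apply: contraNF b_in => /eqP <-.
  rewrite (_ : [set k | _] = set0) ?cards0 ?subn0 //.
  by apply/setP => k; rewrite !inE (negbTE tau_a_neq) tau_a_b.
- have [tau_a _] := tau_out a a_in; have [_ tau_b_neq] := tau_in b b_in.
  rewrite (_ : [set k | _] = set0) ?cards0 ?subn0 //.
  by apply/setP => k; rewrite !inE tau_a (negbTE tau_b_neq) (negbTE ab) andbF.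
have [[tau_a c_a] [tau_b c_b]] := (tau_out a a_in, tau_out b b_in).
rewrite (_ : [set k | _] = setT) ?cardsT ?card_ord ?subnn //.
by apply/setP => k; rewrite !inE tau_a tau_b c_a c_b divr1 mulr1 !eqxx.
Qed.

Lemma card_refl_moved_hypidx :
  #|[set t : hypidx n e |
     ~~ refl_fixes_hyperplane i j zeta (sval t).1.1 (sval t).1.2 (w ^+ (sval t).2)]|
    = (2 * (n - 2) * e + (e - (~~ odd e).+1))%N.
Proof.
pose moved (ab : 'I_n * 'I_n) (k : 'I_e) := ~~ refl_fixes_hyperplane i j zeta ab.1 ab.2 (w ^+ k).
have -> : #|[set t : hypidx n e | moved (sval t).1 (sval t).2]| =
          #|[set x : 'I_n * 'I_n * 'I_e | (x.1.1 < x.1.2)%N && moved x.1 x.2]|.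
  rewrite -(card_imset _ val_inj); apply: eq_card => x; rewrite inE.
  apply/imsetP/andP => [[t t_moved ->] | [lt_x x_moved]].
    by split; [exact: (valP t) | rewrite inE in t_moved].
  by exists (exist _ x lt_x); rewrite ?inE.
rewrite -[LHS]muln1 -sum_nat_cond_const.
rewrite -(pair_big_dep (fun ab : 'I_n * 'I_n => (ab.1 < ab.2)%N) moved (fun _ _ => 1%N)) /=.
rewrite -(pair_big_dep xpredT (fun a b : 'I_n => (a < b)%N)
            (fun a b => \sum_(k | moved (a, b) k) 1%N)) /=.
under eq_bigr => a _ do under eq_bigr => b lt_ab do
  rewrite sum_nat_cond_const muln1 (card_refl_moved_pair (ltn_ord_neq lt_ab)).
have card_compl : #|~: [set i; j]| = (n - 2)%N.
  by have := cardsC [set i; j]; rewrite cards2 ij card_ord; lia.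
apply: double_inj; rewrite sum_ltn_mem_if cards2 ij card_compl -!mul2n; lia.
Qed.

Lemma card_induced_perm_moved (q : {perm hypidx n e}) : induces_perm w s q ->
  #|[set t | q t != t]| = (2 * (n - 2) * e + (e - (~~ odd e).+1))%N.
Proof.
move=> q_s; rewrite -card_refl_moved_hypidx; apply: eq_card => t.
by rewrite !inE (induced_perm_fixed _ q_s).
Qed.

End ReflectionOnHyperplanes.

Theorem proposition3p9 (e n : nat) (he : (1 <= e)%N) (hn : (2 <= n)%N)
  (w : algC) (hw : e.-primitive_root w)
  (i j : 'I_n) (hij : i != j) (zeta : algC) (hzeta : zeta ^+ e = 1)
  (s : 'M[algC]_n) (hs : @in_Geen e n s) (hrefl : reflection_with_hyp s i j zeta) :
  (exists p : {perm hypidx n e}, induces_perm w s p) /\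
  (forall p : {perm hypidx n e}, induces_perm w s p ->
     if ~~ odd e then
       (-1 : int) ^+ odd_perm p = (-1) ^+ ((n - 2) * e + (e - 2)./2)
       /\ (-1 : int) ^+ ((n - 2) * e + (e - 2)./2) = (-1) ^+ ((e - 2)./2)
     else
       (-1 : int) ^+ odd_perm p = (-1) ^+ ((n - 2) * e + (e - 1)./2)
       /\ (-1 : int) ^+ ((n - 2) * e + (e - 1)./2) = (-1) ^+ (n + (e - 1)./2)).
Proof.
case: hs => sigma [d [_ _ s_mono]]; case: hrefl => s_neq1 s_fix.
have s_act : forall (z : 'cV_n) r, (s *m z) r 0 = refl_coef i j zeta r * z (tperm i j r) 0.
  have s_mono' : s = monomial_mx sigma d := s_mono.
  by rewrite s_mono'; apply: monomial_reflectionE; rewrite -?s_mono' ?(expr_eq1_neq0 he hzeta).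
split=> [|p p_s]; first exact: exists_induced_perm hw hij hzeta s_act.
rewrite (odd_perm_involutive (induced_perm_involutive hw hij hzeta s_act p_s)).
rewrite (card_induced_perm_moved hw hij hzeta s_act p_s).
rewrite -mulnA halfD mul2n odd_double doubleK add0n signr_odd.
case e_odd : (odd e) => /=; split=> //; rewrite -[LHS]signr_odd -[RHS]signr_odd oddD oddM e_odd.
  by rewrite andbT oddD oddB // addbF.
by rewrite andbF.
Qed.
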